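(* Let $\varpi$ be a minuscule fundamental weight, $\bar\phi\in W/W_{P_\varpi}$, $\phi$ the minimal length element of $\bar\phi$, $\phi=s_{\gamma_1}\cdots s_{\gamma_n}$ a reduced expression with simple roots $\gamma_k$, and $\beta_k=i(\gamma_k)$. Let $\beta$ be the unique simple root such that $\langle\beta^\vee,i(\varpi)\rangle=1$. Then $\beta_n=\beta$.
   Context: $G$ is a semisimple algebraic group with maximal torus $T$, Borel subgroup $B$, simple roots $S$, Weyl group $W$ with longest element $w_0$; $\alpha^\vee$ denotes the coroot of $\alpha$. The Weyl involution $i$ sends a simple root $\gamma$ to $-w_0(\gamma)$ and a fundamental weight $\varpi$ to $-w_0(\varpi)$. A fundamental weight $\varpi$ is minuscule if $\langle\alpha^\vee,\varpi\rangle\le1$ for all positive roots $\alpha$; $P_\varpi$ is the associated maximal parabolic subgroup and $W_{P_\varpi}$ its Weyl group. *)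

From HB Require Import structures.
From mathcomp Require Import all_boot all_order all_algebra.
Set Implicit Arguments. Unset Strict Implicit. Unset Printing Implicit Defensive.
Import Order.TTheory GRing.Theory Num.Theory.
Local Open Scope ring_scope.

Section RootSystems.
Variables (R : realFieldType) (l : nat).
Local Notation V := 'rV[R]_l.

Definition dotv (u v : V) : R := (u *m v^T) 0 0.

(* coroot pairing  <a^vee, v> = 2 (a,v)/(a,a) *)
Definition pairing (a v : V) : R := 2 * dotv a v / dotv a a.

Definition refl (a : V) (v : V) : V := v - pairing a v *: a.

Definition root_system (Phi : seq V) : Prop :=
  [/\ uniq Phi /\ (0 : V) \notin Phi,
      (forall v : V, (forall a, a \in Phi -> dotv a v = 0) -> v = 0),
      (forall a b, a \in Phi -> b \in Phi -> refl a b \in Phi),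
      (forall a b, a \in Phi -> b \in Phi -> exists z : int, pairing a b = z%:~R) &
      (forall (a : V) (c : R), a \in Phi -> c *: a \in Phi -> c = 1 \/ c = -1)].

Definition nat_comb (S : seq V) (a : V) : Prop :=
  exists c : 'I_(size S) -> nat, a = \sum_(i < size S) (c i)%:R *: S`_i.

Definition is_base (Phi S : seq V) : Prop :=
  [/\ uniq S, {subset S <= Phi},
      (forall c : 'I_(size S) -> R,
          \sum_(i < size S) c i *: S`_i = 0 -> forall i, c i = 0) &
      (forall a, a \in Phi -> nat_comb S a \/ nat_comb S (- a))].

Definition pos_root (Phi S : seq V) (a : V) : Prop := a \in Phi /\ nat_comb S a.

(* the Weyl group element  s_{g1} o ... o s_{gn}  of a word [:: g1; ...; gn] *)
Definition wordfun (w : seq V) : V -> V := foldr (fun a f => refl a \o f) id w.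

Definition sword (S : seq V) (w : seq V) : Prop := all (fun g => g \in S) w.

Definition reduced (S : seq V) (w : seq V) : Prop :=
  sword S w /\ forall w', sword S w' -> wordfun w' =1 wordfun w -> (size w <= size w')%N.

Definition fund_weight (S : seq V) (alpha varpi : V) : Prop :=
  alpha \in S /\ forall g, g \in S -> pairing g varpi = (g == alpha)%:R.

Definition minuscule (Phi S : seq V) (varpi : V) : Prop :=
  forall a, pos_root Phi S a -> pairing a varpi <= 1.

(* word phis gives the minimal length element of its coset phi W_{P_varpi},
   where W_{P_varpi} is generated by the simple reflections s_g, g <> alpha *)
Definition min_coset_rep (S : seq V) (alpha : V) (phis : seq V) : Prop :=
  forall u, all (fun g => (g \in S) && (g != alpha)) u ->
  forall w', sword S w' -> wordfun w' =1 wordfun (phis ++ u) ->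
  (size phis <= size w')%N.

Definition longest_word (S : seq V) (w0s : seq V) : Prop :=
  reduced S w0s /\ forall w, reduced S w -> (size w <= size w0s)%N.

(* Weyl involution i(x) = - w0(x) *)
Definition weyl_inv (w0s : seq V) (x : V) : V := - wordfun w0s x.

End RootSystems.

(* The last letter of the minimal coset representative is alpha, since
   otherwise dropping it gives a shorter word in the same coset; so the claim
   is -w0(alpha) = beta.  The longest element w0 sends every simple root to a
   negative root (otherwise w0 s_g would have one inversion more than w0 and
   hence be longer), so -w0 preserves the cone spanned by the simple roots, and
   so does its inverse, the Weyl involution of the reversed (again longest)
   word.  Simple roots are indecomposable in that cone, hence -w0 maps simple
   roots onto simple roots.  Writing beta = -w0(g) with g simple, invariance
   of the pairing gives <g^vee, varpi> = <beta^vee, -w0(varpi)> = 1, so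
   g = alpha. *)

From HB Require Import structures.
From mathcomp Require Import all_boot all_order all_algebra.
From mathcomp Require Import zify ring boolp.
Set Implicit Arguments. Unset Strict Implicit. Unset Printing Implicit Defensive.
Import Order.TTheory GRing.Theory Num.Theory.
Local Open Scope ring_scope.

(** * Reflections and words *)

Section Reflections.
Variables (R : realFieldType) (l : nat).
Local Notation V := 'rV[R]_l.
Implicit Types (a b u v x : V) (w : seq V).

Lemma dotvE u v : dotv u v = \sum_k u 0 k * v 0 k.
Proof. by rewrite /dotv !mxE; apply: eq_bigr => k _; rewrite mxE. Qed.

Lemma dotvC u v : dotv u v = dotv v u.
Proof. by rewrite !dotvE; apply: eq_bigr => k _; rewrite mulrC. Qed.

Lemma dotv_is_linear u : linear_for *%R (dotv u).
Proof. by move=> c v x; rewrite /dotv linearP mulmxDr -scalemxAr !mxE. Qed.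

HB.instance Definition _ u :=
  GRing.isLinear.Build R V R *%R (dotv u) (dotv_is_linear u).

Lemma dotvv_eq0 u : (dotv u u == 0) = (u == 0).
Proof.
apply/eqP/eqP => [|->]; last by rewrite linear0.
rewrite dotvE => /psumr_eq0P u0; apply/rowP => k; rewrite mxE.
by apply/eqP; rewrite -[_ == 0]orbb -mulf_eq0 u0 // => i _; rewrite -expr2 sqr_ge0.
Qed.

Lemma dotvNN u v : dotv (- u) (- v) = dotv u v.
Proof. by rewrite !dotvE; apply: eq_bigr => k _; rewrite !mxE mulrNN. Qed.

Lemma pairing_self a : a != 0 -> pairing a a = 2.
Proof. by move=> a0; rewrite /pairing mulfK // dotvv_eq0. Qed.

Lemma pairing_is_linear a : linear_for *%R (pairing a).
Proof. by move=> c u v; rewrite /pairing linearP /=; ring. Qed.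

HB.instance Definition _ a :=
  GRing.isLinear.Build R V R *%R (pairing a) (pairing_is_linear a).

Lemma refl_is_linear a : linear (refl a).
Proof.
move=> c u v; rewrite /refl linearP /= scalerDl scalerBr -scalerA.
by rewrite opprD addrACA.
Qed.

HB.instance Definition _ a := GRing.isLinear.Build R V V *:%R (refl a) (refl_is_linear a).

Lemma refl_self a : a != 0 -> refl a a = - a.
Proof. by move=> a0; rewrite /refl pairing_self // scaler_nat mulr2n opprD addNKr. Qed.

Lemma reflK a : a != 0 -> involutive (refl a).
Proof.
move=> a0 v; rewrite {2}/refl linearB linearZ /= refl_self //.
by rewrite scalerN opprK /refl subrK.
Qed.

Lemma dotv_reflC a u v : dotv (refl a u) v = dotv u (refl a v).
Proof.
rewrite dotvC /refl !linearB !linearZ /= (dotvC v u) (dotvC v a) /pairing.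
by rewrite (dotvC u a); ring.
Qed.

Lemma dotv_refl a u v : a != 0 -> dotv (refl a u) (refl a v) = dotv u v.
Proof. by move=> a0; rewrite dotv_reflC reflK. Qed.

Lemma wordfun_cat w1 w2 x : wordfun (w1 ++ w2) x = wordfun w1 (wordfun w2 x).
Proof. by elim: w1 => //= a w1 ->. Qed.

Lemma wordfun_rcons w a x : wordfun (rcons w a) x = wordfun w (refl a x).
Proof. by rewrite -cats1 wordfun_cat. Qed.

Lemma wordfun_is_linear w : linear (wordfun w).
Proof. by elim: w => [|a w IH] c u v //=; rewrite IH linearP. Qed.

HB.instance Definition _ w :=
  GRing.isLinear.Build R V V *:%R (wordfun w) (wordfun_is_linear w).

Lemma weyl_inv_is_linear w : linear (weyl_inv w).
Proof. by move=> c u v; rewrite /weyl_inv linearP opprD scalerN. Qed.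

HB.instance Definition _ w :=
  GRing.isLinear.Build R V V *:%R (weyl_inv w) (weyl_inv_is_linear w).

Section NonzeroWord.
Variable w : seq V.
Hypothesis w_neq0 : all (predC1 0) w.

Lemma dotv_wordfun u v : dotv (wordfun w u) (wordfun w v) = dotv u v.
Proof.
elim: w w_neq0 => //= a w' IH /andP[a0 /IH <-].
exact: dotv_refl.
Qed.

Lemma pairing_wordfun a v : pairing (wordfun w a) (wordfun w v) = pairing a v.
Proof. by rewrite /pairing !dotv_wordfun. Qed.

Lemma pairing_weyl_inv a v : pairing (weyl_inv w a) (weyl_inv w v) = pairing a v.
Proof. by rewrite /pairing /weyl_inv !dotvNN !dotv_wordfun. Qed.

Lemma wordfun_revK : cancel (wordfun (rev w)) (wordfun w).
Proof.
elim: w w_neq0 => // a w' IH /andP[a0 /IH w'K] x.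
by rewrite rev_cons wordfun_rcons /= w'K reflK.
Qed.

Lemma refl_wordfun a x :
  refl (wordfun w a) (wordfun w x) = wordfun w (refl a x).
Proof. by rewrite /refl pairing_wordfun linearB [in RHS]linearZ. Qed.

Lemma weyl_inv_revK : cancel (weyl_inv (rev w)) (weyl_inv w).
Proof. by move=> x; rewrite /weyl_inv linearN /= opprK wordfun_revK. Qed.
End NonzeroWord.

Lemma wordfunK w : all (predC1 0) w -> cancel (wordfun w) (wordfun (rev w)).
Proof.
by move=> w_neq0 x; rewrite -[X in wordfun X x]revK wordfun_revK ?all_rev.
Qed.

Lemma weyl_invK w : all (predC1 0) w -> cancel (weyl_inv w) (weyl_inv (rev w)).
Proof.
by move=> w_neq0 x; rewrite -[X in weyl_inv X x]revK weyl_inv_revK ?all_rev.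
Qed.
End Reflections.

Lemma count_add_eq (T : eqType) (s : seq T) (a1 a2 b1 b2 : pred T) :
  {in s, forall x, a1 x + a2 x = b1 x + b2 x}%N ->
  (count a1 s + count a2 s = count b1 s + count b2 s)%N.
Proof.
elim: s => //= x s IH ab; rewrite addnACA [RHS]addnACA ab ?mem_head // IH // => y ys.
by apply: ab; rewrite in_cons ys orbT.
Qed.

Lemma count_pred1_and (T : eqType) (s : seq T) x (c : bool) :
  uniq s -> x \in s -> count (fun y => (y == x) && c) s = c.
Proof.
move=> s_uniq xs; case: c.
  by rewrite (eq_count (a2 := pred1 x)) ?count_uniq_mem ?xs // => y; rewrite andbT.
by rewrite (eq_count (a2 := pred0)) ?count_pred0 // => y; rewrite andbF.
Qed.

Section RootSystem.
Variables (R : realFieldType) (l : nat) (Phi S : seq 'rV[R]_l).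
Hypotheses (RS : root_system Phi) (BS : is_base Phi S).
Local Notation V := 'rV[R]_l.
Local Notation n := (size S).
Implicit Types (a b g h x y : V) (w : seq V).

Lemma root_neq0 a : a \in Phi -> a != 0.
Proof. by case: RS => -[_ Phi0] _ _ _ _ aPhi; apply: contraNneq Phi0 => <-. Qed.

Lemma root_refl a b : a \in Phi -> b \in Phi -> refl a b \in Phi.
Proof. by case: RS => _ _ + _ _; apply. Qed.

Lemma root_opp a : a \in Phi -> - a \in Phi.
Proof. by move=> aPhi; rewrite -refl_self ?root_neq0 ?root_refl. Qed.

Lemma simple_root g : g \in S -> g \in Phi.
Proof. by case: BS => _ + _ _; apply. Qed.

Lemma simple_neq0 g : g \in S -> g != 0.
Proof. by move/simple_root/root_neq0. Qed.

Lemma sword_neq0 w : sword S w -> all (predC1 0) w.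
Proof. by move=> /allP Sw; apply/allP => g /Sw /simple_neq0. Qed.

Lemma wordfun_root w a : sword S w -> a \in Phi -> wordfun w a \in Phi.
Proof.
elim: w => //= g w IH /andP[gS Sw] aPhi.
by apply: root_refl; [exact: simple_root | exact: IH].
Qed.

(** * The cone spanned by a base *)

Lemma nat_comb0 : nat_comb S 0.
Proof. by exists (fun=> 0%N); rewrite big1 // => i _; rewrite scale0r. Qed.

Lemma nat_combD x y : nat_comb S x -> nat_comb S y -> nat_comb S (x + y).
Proof.
move=> [c ->] [d ->]; exists (fun i => c i + d i)%N.
by rewrite -big_split; apply: eq_bigr => i _; rewrite natrD scalerDl.
Qed.

Lemma nat_combZ (m : nat) x : nat_comb S x -> nat_comb S (m%:R *: x).
Proof.
move=> [c ->]; exists (fun i => m * c i)%N.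
by rewrite scaler_sumr; apply: eq_bigr => i _; rewrite natrM scalerA.
Qed.

Lemma simple_nth g : g \in S -> {j : 'I_n | g = S`_j}.
Proof. by move=> gS; exists (Ordinal (etrans (index_mem g S) gS)); rewrite nth_index. Qed.

Lemma simple_sum (j : 'I_n) : S`_j = \sum_i (i == j)%:R *: S`_i.
Proof.
rewrite (bigD1 j) //= eqxx scale1r big1 ?addr0 // => i /negbTE ->.
by rewrite scale0r.
Qed.

Lemma nat_comb_simple g : g \in S -> nat_comb S g.
Proof.
by case/simple_nth => j ->; exists (fun i => (i == j) : nat); rewrite simple_sum.
Qed.

Lemma nat_comb_linear (f : {linear V -> V}) x :
  (forall g, g \in S -> nat_comb S (f g)) -> nat_comb S x -> nat_comb S (f x).
Proof.
move=> fS [c ->]; rewrite linear_sum.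
apply: (big_ind (nat_comb S)) => [||i _]; [exact: nat_comb0 | exact: nat_combD |].
by rewrite linearZ; apply/nat_combZ/fS/mem_nth.
Qed.

Lemma base_coef_uniq (c d : 'I_n -> R) :
  \sum_i c i *: S`_i = \sum_i d i *: S`_i -> c =1 d.
Proof.
case: BS => _ _ indep _ cd i; apply/eqP; rewrite -subr_eq0; apply/eqP.
apply: (indep (fun i => c i - d i)); rewrite -[RHS](subrr (\sum_i d i *: S`_i)).
by rewrite -[X in X - _]cd -sumrB; apply: eq_bigr => k _; rewrite scalerBl.
Qed.

Lemma nat_comb_add_coef (c d : 'I_n -> nat) (e : 'I_n -> R) :
  \sum_i (c i)%:R *: S`_i + \sum_i (d i)%:R *: S`_i = \sum_i e i *: S`_i ->
  forall i, (c i + d i)%:R = e i.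
Proof.
move=> cde; apply: base_coef_uniq; rewrite -cde -big_split.
by apply: eq_bigr => i _; rewrite natrD scalerDl.
Qed.

Lemma nat_comb_pointed x y : nat_comb S x -> nat_comb S y -> x + y = 0 -> x = 0.
Proof.
move=> [c ->] [d ->] cd0.
have coef0 := @nat_comb_add_coef c d (fun=> 0).
rewrite cd0 big1 in coef0 => [|i _]; last by rewrite scale0r.
rewrite big1 // => i _; have /eqP := coef0 erefl i.
by rewrite pnatr_eq0 addn_eq0 => /andP[/eqP -> _]; rewrite scale0r.
Qed.

Lemma nat_comb_add_simple g x y (k : R) : g \in S ->
  nat_comb S x -> nat_comb S y -> x + y = k *: g -> exists m : nat, x = m%:R *: g.
Proof.
case/simple_nth=> j -> [c ->] [d ->] cdk.
have {cdk} coef i : (c i + d i)%:R = k * (i == j)%:R.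
  apply: (@nat_comb_add_coef c d (fun i => k * (i == j)%:R)).
  rewrite cdk simple_sum scaler_sumr.
  by apply: eq_bigr => i' _; rewrite scalerA.
exists (c j); rewrite (bigD1 j) //= big1 ?addr0 // => i /negbTE ij.
have /eqP := coef i; rewrite ij mulr0 pnatr_eq0 addn_eq0.
by case/andP=> /eqP -> _; rewrite scale0r.
Qed.

Lemma simple_indecomposable g x y : g \in S ->
  nat_comb S x -> nat_comb S y -> x + y = g -> x = 0 \/ y = 0.
Proof.
move=> gS Nx Ny xyg; rewrite -[g]scale1r in xyg.
have [m xE] := nat_comb_add_simple gS Nx Ny xyg.
have [m' yE] := nat_comb_add_simple gS Ny Nx (etrans (addrC y x) xyg).
move: xyg; rewrite xE yE -scalerDl => /eqP; rewrite -subr_eq0 -scalerBl.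
rewrite scaler_eq0 (negbTE (simple_neq0 gS)) orbF subr_eq0 -natrD pnatr_eq1.
move=> /eqP mm'1; have [m0 | m'0] : m = 0%N \/ m' = 0%N by lia.
  by left; rewrite m0 scale0r.
by right; rewrite m'0 scale0r.
Qed.

Lemma nat_comb_sub_simple x : nat_comb S x -> x != 0 ->
  exists2 h, h \in S & nat_comb S (x - h).
Proof.
move=> [c ->] x0; have [i ci0] : exists i, c i != 0%N.
  apply/existsP; apply: contraNT x0; rewrite negb_exists => /forallP c0.
  by rewrite big1 // => i _; rewrite (eqP (negPn (c0 i))) scale0r.
exists S`_i; first exact: mem_nth.
exists (fun k => c k - (k == i))%N; rewrite [S`_i]simple_sum -sumrB.
apply: eq_bigr => k _; rewrite -scalerBl natrB //.
by case: eqP => [->|]; rewrite ?lt0n.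
Qed.

(** * Positive roots and inversions *)

(* [nat_comb] quantifies over coefficient functions; [asbool] makes it a
   boolean so that positive roots can be counted. *)
Definition posb a : bool := `[< nat_comb S a >].

Lemma posbP a : reflect (nat_comb S a) (posb a).
Proof. exact: asboolP. Qed.

Lemma root_pos_or_neg a : a \in Phi -> nat_comb S a \/ nat_comb S (- a).
Proof. by case: BS => _ _ _; apply. Qed.

Lemma posbN a : a \in Phi -> posb (- a) = ~~ posb a.
Proof.
move=> aPhi; case: (posbP a) => [Na | Na] /=.
  apply/negbTE/posbP => /(nat_comb_pointed Na)/(_ (subrr a)) a0.
  by move: (root_neq0 aPhi); rewrite a0 eqxx.
by apply/posbP; case: (root_pos_or_neg aPhi).
Qed.

Lemma nat_comb_refl_simple g a : g \in S -> a \in Phi ->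
  nat_comb S a -> a != g -> nat_comb S (refl g a).
Proof.
move=> gS aPhi Na ag.
have [//|Nr] := root_pos_or_neg (root_refl (simple_root gS) aPhi).
have [m am] : exists m : nat, a = m%:R *: g.
  apply: (nat_comb_add_simple gS Na Nr (k := pairing g a)).
  by rewrite /refl opprB addrC subrK.
case: RS => _ _ _ _ /(_ g m%:R (simple_root gS)); rewrite -am => /(_ aPhi) [m1|m_1].
  by move: ag; rewrite am m1 scale1r eqxx.
by have := ler0n R m; rewrite m_1 ler0N1.
Qed.

Lemma posb_refl_simple g b : g \in S -> b \in Phi -> b != g -> b != - g ->
  posb (refl g b) = posb b.
Proof.
move=> gS bPhi bg bNg; case: (posbP b) => [Nb | Nb].
  by apply/posbP; apply: nat_comb_refl_simple.
have Nnb : nat_comb S (- b) by case: (root_pos_or_neg bPhi).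
have -> : refl g b = - refl g (- b) by rewrite linearN opprK.
rewrite posbN; last by apply: root_refl; [apply: simple_root | apply: root_opp].
apply/negbF/posbP/nat_comb_refl_simple; rewrite ?root_opp //.
by rewrite eqr_oppLR.
Qed.

Lemma posb_simple g : g \in S -> posb g.
Proof. by move/nat_comb_simple/posbP. Qed.

Definition inversions (f : V -> V) : nat := count (fun a => posb a && ~~ posb (f a)) Phi.

Lemma eq_inversions f f' : f =1 f' -> inversions f = inversions f'.
Proof. by move=> ff'; apply: eq_count => a; rewrite ff'. Qed.

Lemma root_uniq : uniq Phi.
Proof. by case: RS => -[]. Qed.

Lemma perm_refl_roots g : g \in Phi -> perm_eq (map (refl g) Phi) Phi.
Proof.
move=> gPhi; have gK := reflK (root_neq0 gPhi).
apply: uniq_perm; rewrite ?map_inj_uniq ?root_uniq //; first exact: can_inj gK.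
move=> x; apply/mapP/idP => [[y yPhi ->]|xPhi]; first exact: root_refl.
by exists (refl g x); rewrite ?gK ?root_refl.
Qed.

Lemma inversions_comp_refl f g : g \in Phi ->
  inversions (f \o refl g) = count (fun b => posb (refl g b) && ~~ posb (f b)) Phi.
Proof.
move=> gPhi; rewrite -(permP (perm_refl_roots gPhi)) count_map.
by apply: eq_count => a /=; rewrite reflK ?root_neq0.
Qed.

Lemma inversions_rcons t g : sword S t -> g \in S ->
  (inversions (wordfun (rcons t g)) + ~~ posb (wordfun t g) =
   inversions (wordfun t) + posb (wordfun t g))%N.
Proof.
move=> St gS; have gPhi := simple_root gS; have g0 := root_neq0 gPhi.
set v := wordfun t; have vPhi := wordfun_root St gPhi.
rewrite (eq_inversions (f' := v \o refl g)) => [|x]; last exact: wordfun_rcons.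
rewrite inversions_comp_refl // -(count_pred1_and (~~ posb (v g)) root_uniq gPhi).
rewrite -(count_pred1_and (posb (v g)) root_uniq (root_opp gPhi)).
(* s_g permutes the positive roots other than g, so only b = g and b = -g
   contribute to the difference; their contributions are written as counts. *)
apply: count_add_eq => b bPhi.
have pos_g := posb_simple gS.
have gNg : (g == - g) = false.
  apply/negbTE; rewrite -addr_eq0 -mulr2n -scaler_nat scaler_eq0.
  by rewrite pnatr_eq0 (negbTE g0).
have [-> | bg] := eqVneq b g; first by rewrite refl_self // posbN // pos_g gNg addn0.
have [-> | bNg] := eqVneq b (- g); last by rewrite posb_refl_simple // addn0.
have -> : refl g (- g) = g by rewrite -{1}(refl_self g0) reflK.
by rewrite pos_g posbN // pos_g /v linearN -/v posbN //; case: (posb (v g)).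
Qed.

Lemma inversions_id : inversions id = 0%N.
Proof.
by rewrite /inversions (eq_count (a2 := pred0)) ?count_pred0 // => a /=; rewrite andbN.
Qed.

Lemma inversions_le_size t : sword S t -> (inversions (wordfun t) <= size t)%N.
Proof.
elim/last_ind: t => [|t g IH]; first by rewrite inversions_id.
rewrite /sword all_rcons size_rcons => /andP[gS St].
by have := inversions_rcons St gS; have := IH St; case: posb => /=; lia.
Qed.

Lemma split_at_sign_change p c : sword S p -> c \in Phi ->
  posb c -> ~~ posb (wordfun p c) ->
  exists p1 b p2, p = p1 ++ b :: p2 /\ wordfun p2 c = b.
Proof.
(* At the first sign change the reflection s_b turns a positive root negative,
   which forces that root to be b. *)
move=> + cPhi pos_c; elim: p => [|b p IH] /=; first by rewrite pos_c.
move=> /andP[bS Sp] neg_bpc; have [pos_pc | neg_pc] := boolP (posb (wordfun p c)).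
  exists [::], b, p; split => //; apply/eqP; apply: contraNT neg_bpc => pcb.
  by apply/posbP/nat_comb_refl_simple; rewrite ?wordfun_root //; apply/posbP.
by have [p1 [b' [p2 [-> p2cb']]]] := IH Sp neg_pc; exists (b :: p1), b', p2.
Qed.

Lemma reduced_rcons p a : reduced S (rcons p a) -> reduced S p.
Proof.
rewrite /reduced /sword all_rcons => -[/andP[aS Sp] min_pa]; split => // w' Sw' w'p.
have := min_pa (rcons w' a); rewrite !size_rcons ltnS; apply.
  by rewrite /sword all_rcons aS.
by move=> x; rewrite !wordfun_rcons w'p.
Qed.

Lemma reduced_rcons_pos p a : reduced S (rcons p a) -> posb (wordfun p a).
Proof.
case=> + min_pa; rewrite /sword all_rcons => /andP[aS Sp]; apply: contraT => neg_pa.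
have [p1 [b [p2 [pE p2ab]]]] :=
  split_at_sign_change Sp (simple_root aS) (posb_simple aS) neg_pa.
move: Sp; rewrite pE /sword all_cat /= => /and3P[Sp1 bS Sp2].
have drop_b : wordfun (p1 ++ p2) =1 wordfun (rcons p a).
  move=> z; rewrite pE wordfun_rcons !wordfun_cat /= -p2ab.
  by rewrite refl_wordfun ?sword_neq0 // reflK ?simple_neq0.
have Sp12 : sword S (p1 ++ p2) by rewrite /sword all_cat Sp1.
by have := min_pa _ Sp12 drop_b; rewrite pE size_rcons !size_cat /=; lia.
Qed.

Lemma inversions_reduced t : reduced S t -> inversions (wordfun t) = size t.
Proof.
elim/last_ind: t => [|t g IH] red_tg; first by rewrite inversions_id.
have [+ _] := red_tg; rewrite /sword all_rcons size_rcons => /andP[gS St].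
have := inversions_rcons St gS.
rewrite IH; last exact: reduced_rcons red_tg.
by rewrite (reduced_rcons_pos red_tg) addn0 addn1.
Qed.

Lemma min_coset_rep_last alpha p : sword S p -> min_coset_rep S alpha p ->
  (0 < size p)%N -> last 0 p = alpha.
Proof.
case/lastP: p => [|p c] // + min_pc _; rewrite last_rcons /sword all_rcons.
move=> /andP[cS Sp]; apply/eqP; apply: contraT => c_alpha.
have := min_pc [:: c] _ p Sp; rewrite size_rcons ltnn; apply.
  by rewrite /= cS c_alpha.
by move=> x; rewrite wordfun_cat wordfun_rcons /= reflK ?simple_neq0.
Qed.

(** * The longest element *)

Lemma longest_word_neg w g : longest_word S w -> g \in S -> nat_comb S (weyl_inv w g).
Proof.
move=> [red_w max_w] gS; have Sw := red_w.1.
suff neg_wg : ~~ posb (wordfun w g).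
  by apply/posbP; rewrite /weyl_inv posbN // wordfun_root ?simple_root.
apply/negP => pos_wg; have red_wg : reduced S (rcons w g).
  split=> [|w' Sw' w'wg]; first by rewrite /sword all_rcons gS.
  have := inversions_le_size Sw'; rewrite (eq_inversions w'wg).
  have := inversions_rcons Sw gS.
  by rewrite pos_wg (inversions_reduced red_w) size_rcons /=; lia.
by have := max_w _ red_wg; rewrite size_rcons ltnn.
Qed.

Lemma longest_word_rev w : longest_word S w -> longest_word S (rev w).
Proof.
move=> [[Sw min_w] max_w]; have Srw : sword S (rev w) by rewrite /sword all_rev.
split=> [|w' /max_w]; last by rewrite size_rev.
split=> // w' Sw' w'rw; rewrite size_rev -(size_rev w').
apply: min_w => [|x]; first by rewrite /sword all_rev.
by rewrite -{1}(wordfunK (sword_neq0 Sw) x) -w'rw wordfunK ?sword_neq0.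
Qed.

Lemma weyl_inv_nat_comb w x :
  longest_word S w -> nat_comb S x -> nat_comb S (weyl_inv w x).
Proof. by move=> lw; apply: nat_comb_linear => g; apply: longest_word_neg. Qed.

Lemma weyl_inv_simple w g : longest_word S w -> g \in S -> weyl_inv w g \in S.
Proof.
move=> lw gS; have w_neq0 := sword_neq0 lw.1.1; have lrw := longest_word_rev lw.
set d := weyl_inv w g; have gE : weyl_inv (rev w) d = g by exact: weyl_invK.
have d0 : d != 0.
  by apply: contra_neq (simple_neq0 gS) => d0; rewrite -gE d0 linear0.
(* Peeling a simple root h off d and pulling back along the inverse
   involution decomposes g in the cone, so d - h = 0. *)
have [h hS Ndh] := nat_comb_sub_simple (weyl_inv_nat_comb lw (nat_comb_simple gS)) d0.
have sum_g : weyl_inv (rev w) h + weyl_inv (rev w) (d - h) = g.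
  by rewrite -linearD /= addrC subrK.
have [rh0 | rdh0] := simple_indecomposable gS
  (weyl_inv_nat_comb lrw (nat_comb_simple hS)) (weyl_inv_nat_comb lrw Ndh) sum_g.
  by move: (simple_neq0 hS); rewrite -(weyl_inv_revK w_neq0 h) rh0 linear0 eqxx.
suff -> : d = h by [].
by apply/eqP; rewrite -subr_eq0 -(weyl_inv_revK w_neq0 (d - h)) rdh0 linear0.
Qed.

Lemma weyl_inv_onto_simple w beta : longest_word S w -> beta \in S ->
  exists2 g, g \in S & weyl_inv w g = beta.
Proof.
move=> lw betaS; exists (weyl_inv (rev w) beta).
  exact: weyl_inv_simple (longest_word_rev lw) betaS.
exact: weyl_inv_revK (sword_neq0 lw.1.1) beta.
Qed.
End RootSystem.

Theorem mainTheorem4 (R : realFieldType) (l : nat) (Phi S : seq 'rV[R]_l)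
    (alpha varpi : 'rV[R]_l) (w0s gammas : seq 'rV[R]_l) (beta : 'rV[R]_l) :
  root_system Phi -> is_base Phi S ->
  fund_weight S alpha varpi -> minuscule Phi S varpi ->
  longest_word S w0s ->
  reduced S gammas -> min_coset_rep S alpha gammas ->
  (0 < size gammas)%N ->
  beta \in S -> pairing beta (weyl_inv w0s varpi) = 1 ->
  weyl_inv w0s (last 0 gammas) = beta.
Proof.
move=> RS BS [_ dual_varpi] _ lw [Sgammas _] min_gammas gammas_gt0 betaS beta_varpi.
rewrite (min_coset_rep_last RS BS Sgammas min_gammas gammas_gt0).
have [g gS gbeta] := weyl_inv_onto_simple RS BS lw betaS.
rewrite -gbeta (pairing_weyl_inv (sword_neq0 RS BS lw.1.1)) in beta_varpi *.
have := dual_varpi g gS; rewrite beta_varpi.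
by case: eqP => [-> | _ /eqP]; rewrite ?oner_eq0.
Qed.
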